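(* Let $\mathcal{Z}=(L,\prec)$ where $L\subseteq\{0,1,2,3\}^*$ is the regular language $\{\varepsilon\}\cup 2(0+2)^*\cup 2(0+2)^*(1+3)0^*\cup 30^*\cup 10^*$ and $\prec$ is the radix order on $L$ (shorter words first, words of equal length ordered lexicographically with $0\prec1\prec2\prec3$). Then $\mathcal{Z}$ is not addable, i.e. the set $\{(x,y,x+y):x,y\in\mathbb{N}\}$ is not $\mathcal{Z}$-recognizable.
   Context: For an ANS $(L,\prec)$, $\mathrm{rep}(n)$ is the $n$-th word of $L$ in the order $\prec$ (with $\mathrm{rep}(0)=\varepsilon$ here) and $\mathrm{val}=\mathrm{rep}^{-1}$. A triple $(n_1,n_2,n_3)$ is represented by left-padding $\mathrm{rep}(n_1),\mathrm{rep}(n_2),\mathrm{rep}(n_3)$ with a new symbol $\#$ to a common length and reading them in parallel as a word over $(\{0,1,2,3\}\cup\{\#\})^3$; a set of triples is $\mathcal{Z}$-recognizable if the set of its representations is a regular language. (This ANS is the Dumont–Thomas numeration system of the substitution $a\mapsto abab$, $b\mapsto b$.) *)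

From mathcomp Require Import all_boot.
Set Implicit Arguments. Unset Strict Implicit. Unset Printing Implicit Defensive.

Definition digit := 'I_4.
Definition word := seq digit.

Definition is02 (d : digit) : bool := (nat_of_ord d == 0) || (nat_of_ord d == 2).
Definition is13 (d : digit) : bool := (nat_of_ord d == 1) || (nat_of_ord d == 3).
Definition is0 (d : digit) : bool := nat_of_ord d == 0.

Definition inL (w : word) : bool :=
  [|| w == [::],
      (if w is d :: u then (nat_of_ord d == 2) && all is02 u else false),
      (* 2(0+2)^*(1+3)0^* *)
      (if w is d :: u then (nat_of_ord d == 2) &&
          has (fun i => [&& all is02 (take i u), is13 (nth d u i)
                          & all is0 (drop i.+1 u)]) (iota 0 (size u))
       else false),
      (if w is d :: u then (nat_of_ord d == 3) && all is0 u else false)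
    |
      (if w is d :: u then (nat_of_ord d == 1) && all is0 u else false)].

Definition digits : seq digit :=
  [:: @Ordinal 4 0 isT; @Ordinal 4 1 isT; @Ordinal 4 2 isT; @Ordinal 4 3 isT].

Fixpoint words_of_len (k : nat) : seq word :=
  if k is k'.+1 then [seq d :: w | d <- digits, w <- words_of_len k']
  else [:: [::]].

Definition words_upto (n : nat) : seq word :=
  flatten [seq words_of_len k | k <- iota 0 n.+1].

(** rep n = the n-th word (from 0, rep 0 = eps) of L in radix order.
    Since L has a word of every length (eps, 1 0^(k-1)), the first n+1
    words of L all have length <= n, so they appear in words_upto n. *)
Definition rep (n : nat) : word := nth [::] (filter inL (words_upto n)) n.

(** Letters of the triple alphabet: None stands for the padding symbol #. *)
Definition letter3 := (option digit * option digit * option digit)%type.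

Definition padl (m : nat) (w : word) : seq (option digit) :=
  nseq (m - size w) None ++ map Some w.

Definition pad3 (u v w : word) : seq letter3 :=
  let m := maxn (size u) (maxn (size v) (size w)) in
  zip (zip (padl m u) (padl m v)) (padl m w).

Definition rep3 (n1 n2 n3 : nat) : seq letter3 := pad3 (rep n1) (rep n2) (rep n3).

Record dfa (A : finType) := Dfa {
  dfa_state : finType;
  dfa_start : dfa_state;
  dfa_final : pred dfa_state;
  dfa_trans : dfa_state -> A -> dfa_state }.

Definition dfa_accepts (A : finType) (M : dfa A) (w : seq A) : bool :=
  @dfa_final A M (foldl (@dfa_trans A M) (@dfa_start A M) w).

Definition regular (A : finType) (P : seq A -> Prop) : Prop :=
  exists M : dfa A, forall w, P w <-> dfa_accepts M w.

Definition Z_recognizable (S : nat -> nat -> nat -> Prop) : Prop :=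
  regular (fun t : seq letter3 => exists n1 n2 n3, S n1 n2 n3 /\ t = rep3 n1 n2 n3).

From mathcomp Require Import all_boot zify.
Set Implicit Arguments. Unset Strict Implicit. Unset Printing Implicit Defensive.

(* Besides the empty word, the words of L of length
      k+1 are, in radix order, 1 0^k, then 2u for u in the language
      U = (0+2)^* + (0+2)^*(1+3)0^* of length k, then 3 0^k.  U has
      c_k = 3*2^k - 2 words of length k, which gives an explicit valuation
      rU (the rank of a word in the radix enumeration) with rU (rep n) = n
      and rep (rU w) = w for every w in L.
   2. Fooling words.  For x = 2^(p+2) 0^q and z = 2^(p+1) 0 2^q 3 (both in L)
      we have val z = 2 val x if and only if p = q.
   3. Pumping.  The padded triple word of (x, x, z) splits as P_p ++ S_q,
      where the prefix P_p only depends on p and the suffix S_q only on q.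
      A DFA recognizing addition would reach the same state after P_i and
      P_j for some i <> j, hence would accept P_i ++ S_j, which encodes a
      triple (x, x, z) with z <> x + x, a contradiction. *)

Definition d0 : digit := @Ordinal 4 0 isT.
Definition d1 : digit := @Ordinal 4 1 isT.
Definition d2 : digit := @Ordinal 4 2 isT.
Definition d3 : digit := @Ordinal 4 3 isT.

Lemma mem_digits (d : digit) : d \in digits.
Proof. by case: d => [[|[|[|[|m]]]] hm]. Qed.

Lemma mem_words_of_len k w : (w \in words_of_len k) = (size w == k).
Proof.
elim: k w => [|k IH] w; first by case: w.
apply/allpairsP/idP => [[[d u] [_ /= hu ->]]|]; first by rewrite /= eqSS -IH.
case: w => [//|d u] /=; rewrite eqSS -IH => hu.
by exists (d, u); rewrite mem_digits.
Qed.

Lemma words_of_len_S k : words_of_len k.+1 =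
  map (cons d0) (words_of_len k) ++ map (cons d1) (words_of_len k) ++
  map (cons d2) (words_of_len k) ++ map (cons d3) (words_of_len k).
Proof. by rewrite /= cats0. Qed.

Lemma mem_words_upto N w : (w \in words_upto N) = (size w <= N).
Proof.
apply/flatten_mapP/idP => [[k] | hw].
  by rewrite mem_iota mem_words_of_len add0n ltnS => hk /eqP ->.
by exists (size w); rewrite ?mem_iota ?mem_words_of_len.
Qed.

Lemma words_upto_S N : words_upto N.+1 = words_upto N ++ words_of_len N.+1.
Proof. by rewrite /words_upto -addn1 iotaD map_cat flatten_cat /= cats0. Qed.

Lemma filter_all0 k : filter (all is0) (words_of_len k) = [:: nseq k d0].
Proof.
elim: k => [//|k IH]; rewrite words_of_len_S !filter_cat !filter_map.
rewrite (@eq_filter _ (preim (cons d0) (all is0)) (all is0)) // IH.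
by rewrite !(@eq_filter _ _ pred0) ?filter_pred0.
Qed.

(* Membership in U = (0+2)^* + (0+2)^*(1+3)0^*: read digits 0 and 2 until a
   digit 1 or 3, after which only zeros may follow. *)
Fixpoint inU (w : word) : bool :=
  if w is d :: u then (if is02 d then inU u else all is0 u) else true.

Lemma is13E (d : digit) : is13 d = ~~ is02 d.
Proof. by case: d => [[|[|[|[|m]]]] hm]. Qed.

(* The two branches of L starting with 2 together describe 2U. *)
Lemma inU_spec (d : digit) u :
  all is02 u || has (fun i => [&& all is02 (take i u), is13 (nth d u i)
                          & all is0 (drop i.+1 u)]) (iota 0 (size u)) = inU u.
Proof.
elim: u => [//|e u IH] /=.
rewrite -IH -(addn0 1) iotaDl has_map /= drop0 is13E.
have shift i : preim (addn 1) (fun i : nat =>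
      [&& all is02 (take i (e :: u)), is13 (nth d (e :: u) i)
        & all is0 (drop i u)]) i =
    is02 e && [&& all is02 (take i u), is13 (nth d u i) & all is0 (drop i.+1 u)].
  by rewrite /preim /= add1n /= add0n; case: (is02 e).
by rewrite (eq_has shift); case: (is02 e) => //=; rewrite has_pred0 orbF.
Qed.

Lemma inL_cons d u : inL (d :: u) =
  if nat_of_ord d == 1 then all is0 u else if nat_of_ord d == 2 then inU u
  else if nat_of_ord d == 3 then all is0 u else false.
Proof. by rewrite /inL -(inU_spec d); case: d => [[|[|[|[|m]]]] hm] //=; rewrite orbF. Qed.

Definition FU k : seq word := filter inU (words_of_len k).

(* 1 0^k, the words 2u for u in U of length k, and 3 0^k, in lexicographic
   order: the words of L of length k+1, and also the words of U of length k+1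
   not starting with 0. *)
Definition tailL k : seq word :=
  (d1 :: nseq k d0) :: map (cons d2) (FU k) ++ [:: d3 :: nseq k d0].

Lemma FU_S k : FU k.+1 = map (cons d0) (FU k) ++ tailL k.
Proof.
rewrite /FU words_of_len_S !filter_cat !filter_map.
by rewrite (@eq_filter _ (preim (cons d1) inU) (all is0)) // filter_all0.
Qed.

Lemma filter_inL_S k : filter inL (words_of_len k.+1) = tailL k.
Proof.
rewrite words_of_len_S !filter_cat !filter_map.
rewrite (@eq_filter _ (preim (cons d0) inL) pred0); last by move=> w; rewrite /= inL_cons.
rewrite (@eq_filter _ (preim (cons d1) inL) (all is0)); last by move=> w; rewrite /= inL_cons.
rewrite (@eq_filter _ (preim (cons d2) inL) inU); last by move=> w; rewrite /= inL_cons.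
rewrite (@eq_filter _ (preim (cons d3) inL) (all is0)); last by move=> w; rewrite /= inL_cons.
by rewrite filter_pred0 filter_all0.
Qed.

(* cU k = 3 * 2^k - 2 counts both the words of U of length k and the words of
   L of length at most k. *)
Fixpoint cU k := if k is k'.+1 then (cU k').*2.+2 else 1.

Lemma cU_E k : (cU k).+2 = 3 * 2 ^ k.
Proof. by elim: k => [//|k IH]; rewrite /= expnS; lia. Qed.

(* L has a word of every length, so rep n has length at most n. *)
Lemma cU_ge k : k < cU k.
Proof. by elim: k => [//|k IH] /=; lia. Qed.

(* rU w is the rank of w among the words of U (or of L) of length <= size w;
   a leading 0 is irrelevant, and 1, 2, 3 skip the blocks listed before them. *)
Fixpoint rU (w : word) : nat :=
  if w is d :: u then
    match nat_of_ord d with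
    | 0 => rU u
    | 1 => cU (size u)
    | 2 => cU (size u) + 1 + rU u
    | _ => (cU (size u)).*2.+1
    end
  else 0.

Lemma size_FU k : size (FU k) = cU k.
Proof. by elim: k => [//|k IH]; rewrite FU_S size_cat /= size_cat !size_map IH /=; lia. Qed.

Lemma size_FU_elem k i : i < cU k -> size (nth [::] (FU k) i) = k.
Proof.
move=> hi; apply/eqP; rewrite -mem_words_of_len.
have: nth [::] (FU k) i \in FU k by rewrite mem_nth // size_FU.
by rewrite mem_filter => /andP[].
Qed.

Lemma size_filter_inL N : size (filter inL (words_upto N)) = cU N.
Proof.
elim: N => [//|N IH].
by rewrite words_upto_S filter_cat size_cat IH filter_inL_S /= size_cat size_map size_FU /=; lia.
Qed.

Lemma rU_nth_tail k (A : seq word) :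
  size A = cU k -> (forall i, i < cU k -> rU (nth [::] A i) = i) ->
  (forall i, i < cU k -> rU (nth [::] (FU k) i) = i) ->
  forall i, i < cU k.+1 -> rU (nth [::] (A ++ tailL k) i) = i.
Proof.
move=> sA hA hF i hi; rewrite nth_cat sA.
case: (ltnP i (cU k)) => [/hA //|h1].
rewrite /tailL; case hj: (i - cU k) => [|j] /=; first by rewrite size_nseq; lia.
rewrite nth_cat size_map size_FU.
case: (ltnP j (cU k)) => h2.
  by rewrite (nth_map [::]) ?size_FU //= size_FU_elem // hF //; lia.
have ->: j - cU k = 0 by move: hi => /=; lia.
by rewrite /= size_nseq; move: hi => /=; lia.
Qed.

Lemma rU_nth_FU k i : i < cU k -> rU (nth [::] (FU k) i) = i.
Proof.
elim: k i => [|k IH] i; first by case: i.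
rewrite FU_S; move: i; apply: rU_nth_tail => //; first by rewrite size_map size_FU.
by move=> j hj; rewrite (nth_map [::]) ?size_FU //; exact: IH.
Qed.

Lemma rU_nth_L N i : i < cU N -> rU (nth [::] (filter inL (words_upto N)) i) = i.
Proof.
elim: N i => [|N IH] i; first by case: i.
rewrite words_upto_S filter_cat filter_inL_S; move: i.
exact: rU_nth_tail (size_filter_inL N) IH (@rU_nth_FU N).
Qed.

Lemma nth_left_inverse (T : eqType) (f : T -> nat) (s : seq T) x0 x :
  (forall i, i < size s -> f (nth x0 s i) = i) -> x \in s -> nth x0 s (f x) = x.
Proof. by move=> hf xs; rewrite -{1}(nth_index x0 xs) hf ?index_mem // nth_index. Qed.

(* A word of L comes no earlier than position |w| of the enumeration, so
   rep (rU w) searches a list containing w. *)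
Lemma size_le_rU w : inL w -> size w <= rU w.
Proof.
case: w => [//|[[|[|[|[|m]]]] hm] u] //= _; have := cU_ge (size u); lia.
Qed.

(* rU is the valuation val = rep^-1 of the numeration system. *)
Lemma rU_rep n : rU (rep n) = n.
Proof. by rewrite /rep rU_nth_L // cU_ge. Qed.

Lemma rep_rU w : inL w -> rep (rU w) = w.
Proof.
move=> hw; apply: nth_left_inverse; first by rewrite size_filter_inL; exact: rU_nth_L.
by rewrite mem_filter hw mem_words_upto size_le_rU.
Qed.

(* A prefix 2^n multiplies the "weight" 3 * 2^|u| of the suffix u by 2^n. *)
Lemma rU_nseq2 n u :
  rU (nseq n d2 ++ u) + n + 3 * 2 ^ (size u) = rU u + 3 * 2 ^ (size u) * 2 ^ n.
Proof.
elim: n => [|n IH]; first by rewrite /= addn0 muln1.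
rewrite /= size_cat size_nseq.
by have := cU_E (n + size u); rewrite expnD expnS; lia.
Qed.

Lemma all02_nseq n d : is02 d -> all is02 (nseq n d).
Proof. by move=> h; elim: n => //= n ->; rewrite h. Qed.

Lemma inU_cat s u : all is02 s -> inU (s ++ u) = inU u.
Proof. by elim: s => [//|d s IH] /= /andP[-> /IH]. Qed.

Definition xw p q : word := nseq p.+2 d2 ++ nseq q d0.
Definition zw p q : word := nseq p.+1 d2 ++ d0 :: (nseq q d2 ++ [:: d3]).

Lemma inL_xw p q : inL (xw p q).
Proof.
rewrite /xw /= inL_cons /= inU_cat ?all02_nseq //.
by rewrite -(cats0 (nseq q d0)) inU_cat ?all02_nseq.
Qed.

Lemma inL_zw p q : inL (zw p q).
Proof. by rewrite /zw /= inL_cons /= inU_cat ?all02_nseq //= inU_cat ?all02_nseq. Qed.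

(* Their values, in subtraction-free form. *)
Lemma rU_xw p q : rU (xw p q) + p.+2 + 3 * 2 ^ q = 3 * 2 ^ q * 2 ^ p.+2.
Proof.
have h := rU_nseq2 p.+2 (nseq q d0).
have h0 : rU (nseq q d0) = 0 by elim: q {h}.
by rewrite size_nseq h0 in h; rewrite /xw; lia.
Qed.

Lemma rU_zw p q : rU (zw p q) + p.+1 + 3 * 2 ^ q.+2 + q + 6 =
  3 + 3 * 2 * 2 ^ q + 3 * 2 ^ q.+2 * 2 ^ p.+1.
Proof.
have h1 := rU_nseq2 p.+1 (d0 :: (nseq q d2 ++ [:: d3])).
have h2 := rU_nseq2 q [:: d3].
have s1 : size (d0 :: (nseq q d2 ++ [:: d3])) = q.+2 by rewrite /= size_cat size_nseq addn1.
rewrite s1 [rU (d0 :: _)]/= in h1; rewrite /= in h2.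
by rewrite /zw; lia.
Qed.

Lemma rU_zw_double p q : (rU (zw p q) == rU (xw p q) + rU (xw p q)) = (p == q).
Proof.
apply/eqP/eqP => [|<-].
- have := rU_xw p q; have := rU_zw p q; rewrite !expnS.
  by set A := 2 ^ p; set B := 2 ^ q; nia.
- have := rU_xw p p; have := rU_zw p p; rewrite !expnS.
  by set A := 2 ^ p; nia.
Qed.

Definition unpad (s : seq (option digit)) : word := pmap id s.

Lemma size_padl m s : size s <= m -> size (padl m s) = m.
Proof. by move=> h; rewrite /padl size_cat size_nseq size_map subnK. Qed.

Lemma unpad_padl m s : unpad (padl m s) = s.
Proof.
rewrite /unpad /padl pmap_cat.
have ->: pmap id (nseq (m - size s) (@None digit)) = [::] by elim: (m - size s).
by elim: s => //= d s ->.
Qed.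

Lemma unpad_pad3 u v w :
  [/\ unpad (unzip1 (unzip1 (pad3 u v w))) = u,
      unpad (unzip2 (unzip1 (pad3 u v w))) = v &
      unpad (unzip2 (pad3 u v w)) = w].
Proof.
rewrite /pad3; set m := maxn _ _.
have hu : size u <= m by rewrite leq_maxl.
have hv : size v <= m by rewrite /m (leq_trans (leq_maxl _ (size w))) // leq_maxr.
have hw : size w <= m by rewrite /m (leq_trans (leq_maxr (size v) _)) // leq_maxr.
have su := size_padl hu; have sv := size_padl hv; have sw := size_padl hw.
have suv : size (zip (padl m u) (padl m v)) = m by rewrite size_zip su sv minnn.
by rewrite !(unzip1_zip, unzip2_zip) ?suv ?su ?sv ?sw // !unpad_padl.
Qed.

Lemma pad3_inj u v w u' v' w' :
  pad3 u v w = pad3 u' v' w' -> [/\ u = u', v = v' & w = w'].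
Proof.
move=> e; have [a1 a2 a3] := unpad_pad3 u v w; have [b1 b2 b3] := unpad_pad3 u' v' w'.
by split; [rewrite -a1 e b1 | rewrite -a2 e b2 | rewrite -a3 e b3].
Qed.

Definition Pw p : seq letter3 :=
  zip (zip (None :: nseq p (Some d2)) (None :: nseq p (Some d2))) (nseq p.+1 (Some d2)).
Definition Sw q : seq letter3 :=
  zip (zip (Some d2 :: Some d2 :: nseq q (Some d0)) (Some d2 :: Some d2 :: nseq q (Some d0)))
      (Some d0 :: nseq q (Some d2) ++ [:: Some d3]).

Lemma pad3_split p q : pad3 (xw p q) (xw p q) (zw p q) = Pw p ++ Sw q.
Proof.
have sx : size (xw p q) = p + q + 2 by rewrite /xw size_cat !size_nseq; lia.
have sz : size (zw p q) = p + q + 3 by rewrite /zw size_cat /= size_cat !size_nseq /=; lia.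
rewrite /pad3 sx sz (_ : maxn _ _ = p + q + 3); last by lia.
have ->: padl (p + q + 3) (xw p q) =
    (None :: nseq p (Some d2)) ++ (Some d2 :: Some d2 :: nseq q (Some d0)).
  rewrite /padl sx (_ : _ - _ = 1); last by lia.
  by rewrite /xw map_cat !map_nseq /=; congr cons; elim: p {sx sz} => //= p ->.
have ->: padl (p + q + 3) (zw p q) =
    nseq p.+1 (Some d2) ++ (Some d0 :: nseq q (Some d2) ++ [:: Some d3]).
  by rewrite /padl sz subnn /= /zw map_cat !map_nseq /= map_cat map_nseq.
by rewrite !zip_cat // size_zip /= size_nseq minnn.
Qed.

Lemma Pw_Sw_not_sum p q n1 n2 n3 :
  n3 = n1 + n2 -> Pw p ++ Sw q = rep3 n1 n2 n3 -> p = q.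
Proof.
rewrite -pad3_split => e /pad3_inj [e1 e2 e3].
have e21 : n2 = n1 by rewrite -(rU_rep n2) -e2 e1 rU_rep.
by apply/eqP; rewrite -rU_zw_double e3 e1 !rU_rep e e21.
Qed.

Lemma Pw_Sw_sum q : exists n1 n2 n3, n3 = n1 + n2 /\ Pw q ++ Sw q = rep3 n1 n2 n3.
Proof.
exists (rU (xw q q)), (rU (xw q q)), (rU (zw q q)); split.
  by apply/eqP; rewrite rU_zw_double.
by rewrite -pad3_split /rep3 !rep_rU ?inL_xw ?inL_zw.
Qed.

(* Pigeonhole: among infinitely many prefixes, two distinct ones lead a DFA
   to the same state, so no suffix distinguishes them. *)
Lemma dfa_same_state (A : finType) (M : dfa A) (P : nat -> seq A) :
  exists i j, i != j /\ forall s, dfa_accepts M (P i ++ s) = dfa_accepts M (P j ++ s).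
Proof.
pose st (i : 'I_#|dfa_state M|.+1) := foldl (@dfa_trans _ M) (@dfa_start _ M) (P i).
have: ~~ injectiveb st by apply/negP => /injectiveP/leq_card; rewrite card_ord ltnn.
case/injectivePn => i [j] hij hst; exists (val i), (val j); split; first exact: hij.
by move=> s; rewrite /dfa_accepts !foldl_cat; move: hst; rewrite /st => ->.
Qed.

Theorem mainTheorem10 :
  ~ Z_recognizable (fun x y z => z = x + y).
Proof.
case=> M HM.
have [i [j [hij same]]] := dfa_same_state M Pw.
have: dfa_accepts M (Pw j ++ Sw j) by apply/HM; exact: Pw_Sw_sum.
rewrite -same => /HM [n1 [n2 [n3 [e h]]]].
by move: hij; rewrite (Pw_Sw_not_sum e h) eqxx.
Qed.
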